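(* Let $A$ be a finite alphabet and $x\in A^{\mathbb N}$ an infinite word. Then there exists a quasiperiodic infinite word $y$ (over some finite alphabet) that is complexity equivalent to $x$, i.e. there is a positive integer $K$ such that for all $n\geq 1$, $p_n(x)\leq K\,p_{Kn}(y)$ and $p_n(y)\leq K\,p_{Kn}(x)$. *)

From mathcomp Require Import all_boot.
From mathcomp Require Import boolp.
Set Implicit Arguments. Unset Strict Implicit. Unset Printing Implicit Defensive.

Definition factor_at (A : Type) (x : nat -> A) (i n : nat) : n.-tuple A :=
  [tuple x (i + k) | k < n].

Definition complexity (A : finType) (x : nat -> A) (n : nat) : nat :=
  #|[set t : n.-tuple A | `[< exists i : nat, t = factor_at x i n >]]|.

Definition quasiperiodic (B : Type) (y : nat -> B) : Prop :=
  exists (m : nat) (q : m.-tuple B), 0 < m /\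
    forall i : nat, exists j : nat, j <= i < j + m /\ factor_at y j m = q.

Definition complexity_equivalent (A B : finType) (x : nat -> A) (y : nat -> B)
  : Prop :=
  exists K : nat, 0 < K /\
    forall n : nat, 1 <= n ->
      complexity x n <= K * complexity y (K * n) /\
      complexity y n <= K * complexity x (K * n).

From mathcomp Require Import all_boot.
From mathcomp Require Import boolp zify.

Set Implicit Arguments.
Unset Strict Implicit.
Unset Printing Implicit Defensive.

(* Replace every letter of x by a block of length L = 2|A| + 1 over {0,1}:
   the letter of rank i becomes (10)^(i+1) 1 (10)^(|A|-i-1), whose only
   factor 11 sits at position 2i+2, so distinct letters get distinct blocks,
   and every block starts with 1, so the resulting binary word y is covered by
   occurrences of 101 (possibly ending in the next block).  A factor of x of
   length n is read off the factor of y of length Ln at position L i, and a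
   factor of y of length n is determined by its offset in a block together
   with a factor of x of length Ln; hence both complexity inequalities hold
   with K = L. *)

Lemma nth_factor_at (A : Type) (d : A) (x : nat -> A) i n j :
  j < n -> nth d (factor_at x i n) j = x (i + j).
Proof.
by move=> ltjn; rewrite -[j]/(val (Ordinal ltjn)) -tnth_nth tnth_mktuple.
Qed.

Lemma complexity_le_mul (A B C : finType) (x : nat -> A) (y : nat -> B)
    (n m : nat) (f : C * m.-tuple B -> n.-tuple A) (g : nat -> nat) :
  (forall i, exists c, factor_at x i n = f (c, factor_at y (g i) m)) ->
  complexity x n <= #|C| * complexity y m.
Proof.
move=> fxy; rewrite /complexity -cardsT -cardsX.
apply: leq_trans (leq_imset_card f _); apply: subset_leq_card.
apply/subsetP => _ /[!inE] /asboolP [i ->].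
have [c ->] := fxy i; apply: imset_f; rewrite !inE /=.
by apply/asboolP; exists (g i).
Qed.

Section BlockCode.

Variables (A B : finType) (L : nat) (code : A -> L.-tuple B).
Hypotheses (L_gt0 : 0 < L) (code_inj : injective code).
Variables (a0 : A) (b0 : B).

Definition blow (x : nat -> A) (p : nat) : B :=
  nth b0 (code (x (p %/ L))) (p %% L).

Lemma blow_block x k s : s < L -> blow x (L * k + s) = nth b0 (code (x k)) s.
Proof.
move=> ltsL; rewrite /blow mulnC divnMDl // modnMDl.
by rewrite divn_small // modn_small // addn0.
Qed.

Definition decode (w : L.-tuple B) : A := odflt a0 [pick a | code a == w].

Lemma codeK : cancel code decode.
Proof.
move=> a; rewrite /decode; case: pickP => [a' /eqP /code_inj // | no_a].
by have /eqP := no_a a.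
Qed.

Definition decode_blocks n (w : (L * n).-tuple B) : n.-tuple A :=
  [tuple decode [tuple nth b0 w (L * k + s) | s < L] | k < n].

Lemma factor_at_decode x i n :
  factor_at x i n = decode_blocks (factor_at (blow x) (L * i) (L * n)).
Proof.
apply: eq_from_tnth => k; rewrite !tnth_mktuple -[x _]codeK; congr decode.
apply: eq_from_tnth => s; rewrite tnth_mktuple (tnth_nth b0).
have ltkL : L * k + s < L * n by have := ltn_ord k; have := ltn_ord s; nia.
by rewrite nth_factor_at // addnA -mulnDr blow_block.
Qed.

Definition read_shifted n (rw : 'I_L * (L * n).-tuple A) : n.-tuple B :=
  [tuple nth b0 (code (nth a0 rw.2 ((rw.1 + k) %/ L))) ((rw.1 + k) %% L) | k < n].

Lemma factor_at_blow x p n : 0 < n ->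
  factor_at (blow x) p n =
    read_shifted (Ordinal (ltn_pmod p L_gt0), factor_at x (p %/ L) (L * n)).
Proof.
move=> n_gt0; apply: eq_from_tnth => k; rewrite !tnth_mktuple /=.
set r := p %% L.
have ltrkLn : (r + k) %/ L < L * n.
  have := ltn_ord k; have : r < L by exact: ltn_pmod.
  have := leq_div (r + k) L; nia.
rewrite nth_factor_at // /blow.
have -> : p + k = p %/ L * L + (r + k) by rewrite addnA -divn_eq.
by rewrite divnMDl // modnMDl.
Qed.

Lemma complexity_le_blow x n : complexity x n <= complexity (blow x) (L * n).
Proof.
rewrite -[complexity _ (L * n)]mul1n -card_unit.
apply: (complexity_le_mul (f := fun w : unit * _ => decode_blocks w.2) (g := muln L)).
by move=> i; exists tt; apply: factor_at_decode.
Qed.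

Lemma complexity_blow_le x n :
  0 < n -> complexity (blow x) n <= L * complexity x (L * n).
Proof.
move=> n_gt0; rewrite -[X in X * _]card_ord.
apply: (complexity_le_mul (f := @read_shifted n) (g := divn^~ L)).
by move=> p; eexists; apply: factor_at_blow.
Qed.

End BlockCode.

Definition mark (i j : nat) : bool := if j <= 2 * i + 2 then ~~ odd j else odd j.

Lemma mark_inj N i i' : i < N -> i' < N ->
  (forall s, s < 2 * N + 1 -> mark i s = mark i' s) -> i = i'.
Proof.
move=> ltiN lti'N same; apply/eqP; rewrite eqn_leq; apply/andP; split;
  rewrite leqNgt; apply/negP => lt.
- have := same (2 * i' + 3); rewrite /mark; case: ifP; case: ifP => ? ? e; lia.
- have := same (2 * i + 3); rewrite /mark; case: ifP; case: ifP => ? ? e; lia.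
Qed.

Lemma mark_cover N i r : i < N -> r < 2 * N + 1 ->
  exists s, [/\ s <= r <= s + 2, s + 2 <= 2 * N + 1, mark i s,
    ~~ mark i (s + 1) & mark i (s + 2)].
Proof.
move=> ltiN ltrN; rewrite /mark.
have [le_r_marker | lt_marker_r] := leqP r (2 * i + 2).
  case: (boolP (odd r)) => odd_r.
    by exists (r - 1); do 3 (case: ifP => ?); split; lia.
  have [le_r_2i | lt_2i_r] := leqP r (2 * i).
    by exists r; do 3 (case: ifP => ?); split; lia.
  by exists (2 * i); do 3 (case: ifP => ?); split; lia.
case: (boolP (odd r)) => odd_r.
  by exists r; do 3 (case: ifP => ?); split; lia.
by exists (r - 1); do 3 (case: ifP => ?); split; lia.
Qed.

Section MarkCode.

Variable A : finType.

Definition mark_length : nat := 2 * #|A| + 1.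

Definition mark_code (a : A) : mark_length.-tuple bool :=
  [tuple mark (enum_rank a) s | s < mark_length].

Lemma mark_length_gt0 : 0 < mark_length.
Proof. by rewrite /mark_length addn1. Qed.

Lemma mark_code_inj : injective mark_code.
Proof.
move=> a a' /(congr1 (fun w : mark_length.-tuple bool => tnth w)) same.
apply/enum_rank_inj/val_inj/(@mark_inj #|A|) => [||s ltsL]; try exact: ltn_ord.
by have := congr1 (fun w => w (Ordinal ltsL)) same; rewrite !tnth_mktuple.
Qed.

Lemma nth_mark_code a s :
  s < mark_length -> nth false (mark_code a) s = mark (enum_rank a) s.
Proof. by move=> ltsL; rewrite -[s]/(val (Ordinal ltsL)) nth_mktuple. Qed.

Lemma blow_mark_code (x : nat -> A) k s : s <= mark_length ->
  blow mark_code false x (mark_length * k + s) = mark (enum_rank (x k)) s.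
Proof.
have L_gt0 := mark_length_gt0.
rewrite leq_eqVlt => /predU1P [-> | ltsL].
  rewrite -mulnSr -[X in blow _ _ _ X]addn0 blow_block //.
  rewrite nth_mark_code // /mark /mark_length.
  have : enum_rank (x k) < #|A| := ltn_ord _.
  by case: ifP => ? ?; rewrite /= ?odd_add ?odd_mul /=; lia.
by rewrite blow_block // nth_mark_code.
Qed.

Lemma quasiperiodic_blow_mark (x : nat -> A) :
  quasiperiodic (blow mark_code false x).
Proof.
exists 3, [tuple true; false; true]; split => // p.
set L := mark_length; set k := p %/ L.
have ltrL : p %% L < 2 * #|A| + 1 by rewrite ltn_mod mark_length_gt0.
have [s [cover_r ltsL mark0 mark1 mark2]] :=
  mark_cover (ltn_ord (enum_rank (x k))) ltrL.
exists (L * k + s); split.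
  have p_eq : p = L * k + p %% L by rewrite mulnC -divn_eq.
  by move: cover_r p_eq; set r := p %% L; lia.
apply: eq_from_tnth => t; rewrite tnth_mktuple.
have le_s2L : s + 2 <= L := ltsL.
case: t => [[|[|[|t]]] lt_t3] //=; rewrite -?addnA blow_mark_code;
  rewrite ?addn0 ?(negbTE mark1) //; apply: leq_trans _ le_s2L.
- exact: leq_addr.
- by rewrite leq_add2l.
Qed.

End MarkCode.

Theorem mainTheorem1 (A : finType) (x : nat -> A) :
  exists (B : finType) (y : nat -> B),
    quasiperiodic y /\ complexity_equivalent x y.
Proof.
exists bool, (blow (@mark_code A) false x).
split; first exact: quasiperiodic_blow_mark.
have L_gt0 := mark_length_gt0 A.
exists (mark_length A); split => // n n_gt0; split.
- apply: leq_trans (complexity_le_blow L_gt0 (@mark_code_inj A) (x 0) _ x n) _.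
  exact: leq_pmull.
- exact: (complexity_blow_le _ L_gt0 (x 0)).
Qed.
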